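(* Let $R$ be a local ring and let $s=\sum_{i=1}^{\infty}s_ix^i\in R[[x]]$ be central in $R[[x]]$ with $s\in J\big(R[[x]]\big)$. Let $A(x)\in M_2\big(R[[x]];s\big)$. If $A(0)$ is similar in $M_2(R;s(0))$ to $\left[\begin{smallmatrix} u&1\\ v&w\end{smallmatrix}\right]$ (respectively, to $\left[\begin{smallmatrix} w&1\\ v&u\end{smallmatrix}\right]$) for some $u\in 1+J(R)$, $v\in U(R)$, $w\in J(R)$, then $A(x)$ is similar in $M_2\big(R[[x]];s\big)$ to $\left[\begin{smallmatrix} u(x)&1\\ v(x)&w(x)\end{smallmatrix}\right]$ (respectively, to $\left[\begin{smallmatrix} w(x)&1\\ v(x)&u(x)\end{smallmatrix}\right]$) for some $u(x)\in 1+J\big(R[[x]]\big)$, $v(x)\in U\big(R[[x]]\big)$, $w(x)\in J\big(R[[x]]\big)$ with $u(0)=u$, $v(0)=v$, $w(0)=w$.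
   Context: All rings are associative with identity. A ring $R$ is local if $R/J(R)$ is a division ring, where $J(R)$ is the Jacobson radical; $U(T)$ is the group of units of a ring $T$. $R[[x]]$ is the formal power series ring; for $f\in R[[x]]$, $f(0)$ is its constant term, and for a matrix $A(x)$ over $R[[x]]$, $A(0)$ is obtained by taking constant terms of all entries. For a ring $T$ and a central element $s\in T$, $M_2(T;s)$ denotes the ring whose elements are the $2\times 2$ arrays $\left[\begin{smallmatrix} a&b\\ c&d\end{smallmatrix}\right]$ with $a,b,c,d\in T$, with componentwise addition and multiplication $\left[\begin{smallmatrix} a&b\\ c&d\end{smallmatrix}\right]\left[\begin{smallmatrix} a'&b'\\ c'&d'\end{smallmatrix}\right]=\left[\begin{smallmatrix} aa'+s^2bc'&ab'+bd'\\ ca'+dc'&s^2cb'+dd'\end{smallmatrix}\right]$. Two elements $A,B\in M_2(T;s)$ are similar if $B=P^{-1}AP$ for some unit $P$ of $M_2(T;s)$. *)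

From HB Require Import structures.
From mathcomp Require Import all_boot all_order all_algebra.
From mathcomp Require Import boolp.
Set Implicit Arguments. Unset Strict Implicit. Unset Printing Implicit Defensive.
Import GRing.Theory.
Local Open Scope ring_scope.

Definition is_unit (T : nzRingType) (a : T) : Prop :=
  exists b : T, a * b = 1 /\ b * a = 1.

Definition left_ideal (T : nzRingType) (I : T -> Prop) : Prop :=
  [/\ I 0, (forall a b, I a -> I b -> I (a - b)) & (forall r a, I a -> I (r * a))].

Definition maximal_left_ideal (T : nzRingType) (M : T -> Prop) : Prop :=
  [/\ left_ideal M, ~ M 1 &
      forall K : T -> Prop, left_ideal K -> ~ K 1 ->
        (forall a, M a -> K a) -> forall a, K a -> M a].

Definition jacobson (T : nzRingType) (a : T) : Prop :=
  forall M : T -> Prop, maximal_left_ideal M -> M a.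

(* T is local iff T / J(T) is a division ring, written out on representatives:
   the quotient is nonzero (1 is not in J(T)) and every class not equal to 0
   (i.e. a \notin J(T)) has a two-sided inverse modulo J(T). *)
Definition local_ring (T : nzRingType) : Prop :=
  ~ jacobson (1 : T) /\
  forall a : T, ~ jacobson a ->
    exists b : T, jacobson (a * b - 1) /\ jacobson (b * a - 1).

Definition central (T : nzRingType) (s : T) : Prop :=
  forall t : T, s * t = t * s.

Record m2 (T : Type) := M2 { m11 : T; m12 : T; m21 : T; m22 : T }.

Definition m2mul (T : nzRingType) (s : T) (A B : m2 T) : m2 T :=
  M2 (m11 A * m11 B + s ^+ 2 * m12 A * m21 B)
     (m11 A * m12 B + m12 A * m22 B)
     (m21 A * m11 B + m22 A * m21 B)
     (s ^+ 2 * m21 A * m12 B + m22 A * m22 B).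

Definition m2one (T : nzRingType) : m2 T := M2 1 0 0 1.

Definition m2similar (T : nzRingType) (s : T) (A B : m2 T) : Prop :=
  exists P Q : m2 T,
    [/\ m2mul s P Q = m2one T, m2mul s Q P = m2one T &
        B = m2mul s (m2mul s Q A) P].

Definition m2map (T U : Type) (f : T -> U) (A : m2 T) : m2 U :=
  M2 (f (m11 A)) (f (m12 A)) (f (m21 A)) (f (m22 A)).

Record pser (R : Type) := Pser { coef : nat -> R }.

Section PowerSeries.
Variable R : nzRingType.

HB.instance Definition _ := gen_eqMixin (pser R).
HB.instance Definition _ := gen_choiceMixin (pser R).

Lemma pserP (f g : pser R) : (forall n, coef f n = coef g n) -> f = g.
Proof.
case: f g => f [g] /= H; congr Pser; exact: funext.
Qed.

Definition ps0 : pser R := Pser (fun _ => 0).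
Definition psopp (f : pser R) : pser R := Pser (fun n => - coef f n).
Definition psadd (f g : pser R) : pser R := Pser (fun n => coef f n + coef g n).

Lemma psaddA : associative psadd.
Proof. by move=> f g h; apply: pserP => n /=; rewrite addrA. Qed.
Lemma psaddC : commutative psadd.
Proof. by move=> f g; apply: pserP => n /=; rewrite addrC. Qed.
Lemma psadd0 : left_id ps0 psadd.
Proof. by move=> f; apply: pserP => n /=; rewrite add0r. Qed.
Lemma psaddN : left_inverse ps0 psopp psadd.
Proof. by move=> f; apply: pserP => n /=; rewrite addNr. Qed.

HB.instance Definition _ :=
  GRing.isZmodule.Build (pser R) psaddA psaddC psadd0 psaddN.

Definition psmul (f g : pser R) : pser R :=
  Pser (fun n => \sum_(i < n.+1) coef f i * coef g (n - i)).
Definition ps1 : pser R := Pser (fun n => (n == 0)%:R).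

Definition ptr (n : nat) (f : pser R) : {poly R} := \poly_(i < n.+1) coef f i.

Lemma ptr_coef n f k : (k <= n)%N -> (ptr n f)`_k = coef f k.
Proof. by move=> kn; rewrite coef_poly ltnS kn. Qed.

Lemma psmul_ptr n f g k : (k <= n)%N ->
  coef (psmul f g) k = (ptr n f * ptr n g)`_k.
Proof.
move=> kn; rewrite coefM /=; apply: eq_bigr => i _.
have ik : (i <= k)%N by rewrite -ltnS.
rewrite !ptr_coef //; first exact: leq_trans (leq_subr _ _) kn.
exact: leq_trans ik kn.
Qed.

Lemma psmulA : associative psmul.
Proof.
move=> f g h; apply: pserP => n.
rewrite (psmul_ptr _ _ (leqnn n)) [RHS](psmul_ptr _ _ (leqnn n)).
have -> : (ptr n f * ptr n (psmul g h))`_n = (ptr n f * (ptr n g * ptr n h))`_n.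
  rewrite [LHS]coefM [RHS]coefM; apply: eq_bigr => i _.
  by rewrite (ptr_coef _ (leq_subr _ _)) (psmul_ptr _ _ (leq_subr i n)).
have -> : (ptr n (psmul f g) * ptr n h)`_n = ((ptr n f * ptr n g) * ptr n h)`_n.
  rewrite [LHS]coefM [RHS]coefM; apply: eq_bigr => i _.
  have iN : (i <= n)%N by rewrite -ltnS.
  by rewrite (ptr_coef _ iN) (psmul_ptr _ _ iN).
by rewrite mulrA.
Qed.

Lemma psmul1 : left_id ps1 psmul.
Proof.
move=> f; apply: pserP => n /=; rewrite big_ord_recl /= mul1r subn0 big1 ?addr0 //.
by move=> i _; rewrite mul0r.
Qed.

Lemma psmulr1 : right_id ps1 psmul.
Proof.
move=> f; apply: pserP => n /=; rewrite big_ord_recr /= subnn mulr1 big1 ?add0r //.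
move=> i _; rewrite subn_eq0 leqNgt ltn_ord /=; exact: mulr0.
Qed.

Lemma psmulDl : left_distributive psmul psadd.
Proof.
move=> f g h; apply: pserP => n /=; rewrite -big_split /=.
by apply: eq_bigr => i _; rewrite mulrDl.
Qed.

Lemma psmulDr : right_distributive psmul psadd.
Proof.
move=> f g h; apply: pserP => n /=; rewrite -big_split /=.
by apply: eq_bigr => i _; rewrite mulrDr.
Qed.

Lemma ps1_neq0 : ps1 != 0.
Proof.
apply/eqP => /(congr1 (fun f => coef f 0)) /= /eqP; by rewrite oner_eq0.
Qed.

HB.instance Definition _ :=
  GRing.Zmodule_isNzRing.Build (pser R) psmulA psmul1 psmulr1 psmulDl psmulDr ps1_neq0.

Definition const_term (f : pser R) : R := coef f 0.

End PowerSeries.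

From HB Require Import structures.
From mathcomp Require Import all_boot all_order all_algebra.
From mathcomp Require Import boolp.
Set Implicit Arguments. Unset Strict Implicit. Unset Printing Implicit Defensive.
Import GRing.Theory.
Local Open Scope ring_scope.

(* Evaluation at [x = 0] is a ring map R[[x]] -> R, and an element of R[[x]] is
   a unit, resp. in the Jacobson radical, as soon as its constant term is.  Lift
   the matrices conjugating A(0) into normal form to constant matrices P and Q:
   since s(0) = 0 and the off-diagonal entries of a product in M_2(T;s) do not
   involve s, the products P Q and Q P are diagonal with diagonal entries of
   constant term 1, hence invertible, and correcting Q by such an inverse yields
   an exact inverse of P.  Then Q A P has constant term the normal form; a
   diagonal conjugation makes its (1,2) entry equal to 1, and the conditions on
   u, v, w lift from the constant terms. *)

Section PowerSeries.
Variable R : nzRingType.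
Implicit Types (f g : pser R) (a b : R).

Lemma pcoefM f g n : coef (f * g) n = \sum_(i < n.+1) coef f i * coef g (n - i).
Proof. by []. Qed.

Lemma pcoef1 n : coef (1 : pser R) n = (n == 0)%:R.
Proof. by []. Qed.

Fact const_term_is_zmod_morphism : zmod_morphism (@const_term R).
Proof. by []. Qed.

Fact const_term_is_monoid_morphism : monoid_morphism (@const_term R).
Proof. by split=> // f g; rewrite /const_term pcoefM big_ord1 subn0. Qed.

HB.instance Definition _ := GRing.isZmodMorphism.Build _ _ (@const_term R)
  const_term_is_zmod_morphism.
HB.instance Definition _ := GRing.isMonoidMorphism.Build _ _ (@const_term R)
  const_term_is_monoid_morphism.

Lemma const_termM f g : const_term (f * g) = const_term f * const_term g.
Proof. exact: rmorphM. Qed.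

Lemma const_termB f g : const_term (f - g) = const_term f - const_term g.
Proof. exact: rmorphB. Qed.

Definition pconst a : pser R := Pser (fun n => if n is 0 then a else 0).

Lemma pconstK : cancel pconst (@const_term R).
Proof. by []. Qed.

Fact pconst_is_zmod_morphism : zmod_morphism pconst.
Proof. by move=> a b; apply: pserP => -[|n] /=; rewrite ?subr0. Qed.

Fact pconst_is_monoid_morphism : monoid_morphism pconst.
Proof.
split; first by apply: pserP => -[|n].
move=> a b; apply: pserP => -[|n]; rewrite pcoefM ?big_ord1 //.
by rewrite big_ord_recl mulr0 add0r big1 // => i _; rewrite mul0r.
Qed.

HB.instance Definition _ := GRing.isZmodMorphism.Build _ _ pconst
  pconst_is_zmod_morphism.
HB.instance Definition _ := GRing.isMonoidMorphism.Build _ _ pconst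
  pconst_is_monoid_morphism.

Section RightInverse.
Variables (f : pser R) (b : R).
Hypothesis fb : const_term f * b = 1.

(* Coefficient n+1 is solved from [coef (f * g) n.+1 = 0], using [f_0 b = 1]. *)
Fixpoint rinv_coefs n : seq R :=
  if n is n'.+1 then
    let c := rinv_coefs n' in
    rcons c (- b * \sum_(i < n'.+1) coef f i.+1 * nth 0 c (n' - i))
  else [:: b].

Lemma size_rinv_coefs n : size (rinv_coefs n) = n.+1.
Proof. by elim: n => //= n IHn; rewrite size_rcons IHn. Qed.

Lemma nth_rinv_coefs k n m : (k <= n <= m)%N ->
  nth 0 (rinv_coefs n) k = nth 0 (rinv_coefs m) k.
Proof.
case/andP=> kn; elim: m => [|m IHm]; first by rewrite leqn0 => /eqP->.
rewrite leq_eqVlt => /orP[/eqP->//|]; rewrite ltnS => nm.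
by rewrite /= nth_rcons size_rinv_coefs ltnS (leq_trans kn nm) IHm.
Qed.

Definition pser_rinv : pser R := Pser (fun n => nth 0 (rinv_coefs n) n).

Lemma coef_pser_rinvS n : coef pser_rinv n.+1 =
  - b * \sum_(i < n.+1) coef f i.+1 * coef pser_rinv (n - i).
Proof.
rewrite /= nth_rcons size_rinv_coefs ltnn eqxx; congr (_ * _).
by apply: eq_bigr => i _; rewrite (@nth_rinv_coefs _ (n - i) n) ?leqnn ?leq_subr.
Qed.

Lemma pser_rinvP : f * pser_rinv = 1.
Proof.
apply: pserP => -[|n]; rewrite pcoefM pcoef1 ?big_ord1 //.
rewrite big_ord_recl subn0 coef_pser_rinvS mulrA mulrN [coef f 0 * b]fb mulN1r.
by apply/eqP; rewrite addr_eq0.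
Qed.

End RightInverse.

Lemma pser_unit f : is_unit (const_term f) -> is_unit f.
Proof.
case=> b [fb bf].
pose g := pser_rinv f b; pose k := pser_rinv g (const_term f).
have fg : f * g = 1 := pser_rinvP fb.
have gk : g * k = 1 by apply: pser_rinvP; exact: bf.
have fk : f = k by rewrite -[f]mulr1 -gk mulrA fg mul1r.
by exists g; rewrite {2}fk.
Qed.

Lemma pser_unit_const1 f : const_term f = 1 -> is_unit f.
Proof. by move=> f1; apply: pser_unit; rewrite f1; exists 1; rewrite mulr1. Qed.

End PowerSeries.

Section LeftIdeals.
Variable T : nzRingType.
Implicit Types (I M : T -> Prop) (a b f : T).

Lemma left_idealD I a b : left_ideal I -> I a -> I b -> I (a + b).
Proof.
case=> I0 IB _ Ia Ib; rewrite -[b]opprK -[- b]sub0r.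
exact: IB Ia (IB _ _ I0 Ib).
Qed.

Lemma left_ideal_unit I a : left_ideal I -> is_unit a -> I a -> I 1.
Proof. by case=> _ _ IM [b [_ <-]] Ia; apply: IM. Qed.

Lemma left_ideal_span I f :
  left_ideal I -> left_ideal (fun g => exists m t, I m /\ g = m + t * f).
Proof.
case=> I0 IB IM; split.
- by exists 0, 0; rewrite mul0r addr0.
- move=> _ _ [m1 [t1 [I1 ->]]] [m2 [t2 [I2 ->]]].
  by exists (m1 - m2), (t1 - t2); rewrite mulrBl opprD addrACA; split; first exact: IB.
- move=> r _ [m [t [Im ->]]].
  by exists (r * m), (r * t); rewrite mulrDr mulrA; split; first exact: IM.
Qed.

Lemma maximal_left_ideal_span M f : maximal_left_ideal M -> ~ M f ->
  exists m t, M m /\ 1 = m + t * f.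
Proof.
case=> MI _ Mmax Mf; apply: contrapT => no1; apply: Mf.
apply: (Mmax _ (left_ideal_span f MI)) => [K1|m Mm|].
- exact: no1 K1.
- by exists m, 0; rewrite mul0r addr0.
- by case: MI => M0 _ _; exists 0, 1; rewrite add0r mul1r.
Qed.

End LeftIdeals.

Section JacobsonPowerSeries.
Variable R : nzRingType.
Implicit Types M : pser R -> Prop.

Definition const_image M (a : R) := exists g, M g /\ const_term g = a.

Lemma left_ideal_const_image M : left_ideal M -> left_ideal (const_image M).
Proof.
case=> M0 MB MM; split; first by exists 0; rewrite rmorph0.
- move=> _ _ [g [Mg <-]] [h [Mh <-]].
  by exists (g - h); rewrite rmorphB; split; first exact: MB.
- move=> r _ [g [Mg <-]].
  by exists (pconst r * g); rewrite rmorphM; split; first exact: MM.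
Qed.

Lemma maximal_left_ideal_const_image M :
  maximal_left_ideal M -> maximal_left_ideal (const_image M).
Proof.
case=> MI M1 Mmax; split; first exact: left_ideal_const_image.
  by case=> g [Mg g1]; apply/M1/(left_ideal_unit MI (pser_unit_const1 g1) Mg).
move=> K [K0 KB KM] K1 MK a Ka.
have KcI : left_ideal (fun g : pser R => K (const_term g)).
  split=> [|g h|r g]; rewrite ?(rmorph0, rmorphB, rmorphM) //; [exact: KB|exact: KM].
have Mpa : M (pconst a).
  apply: (Mmax _ KcI) => [|g Mg|]; rewrite ?rmorph1 ?pconstK //.
  by apply: MK; exists g.
by exists (pconst a).
Qed.

Lemma jacobson_const_term (f : pser R) : jacobson (const_term f) -> jacobson f.
Proof.
move=> Jf M Mmax; apply: contrapT => Mf.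
have [m [t [Mm e]]] := maximal_left_ideal_span Mmax Mf.
have NM := maximal_left_ideal_const_image Mmax.
case: NM (Jf _ NM) => [[N0 NB NM] N1 _] Nf; apply: N1.
have -> : 1 = const_term m + const_term t * const_term f.
  by rewrite -rmorphM -rmorphD -e rmorph1.
by apply: (left_idealD (And3 N0 NB NM)); [exists m | apply: NM].
Qed.

End JacobsonPowerSeries.

Section TwistedMatrices.
Variables (T : nzRingType) (s : T).

Lemma m2mul1m (A : m2 T) : m2mul s (m2one T) A = A.
Proof. by case: A => *; rewrite /m2mul /= !(mul1r, mulr0, mul0r, addr0, add0r). Qed.

Lemma m2mulm1 (A : m2 T) : m2mul s A (m2one T) = A.
Proof. by case: A => *; rewrite /m2mul /= !(mulr1, mulr0, mul0r, addr0, add0r). Qed.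

Lemma m2_diag_inv (E : m2 T) : m12 E = 0 -> m21 E = 0 ->
  is_unit (m11 E) -> is_unit (m22 E) ->
  exists D, m2mul s E D = m2one T /\ m2mul s D E = m2one T.
Proof.
case: E => e1 e2 e3 e4 /= -> -> [d1 [e1d1 d1e1]] [d4 [e4d4 d4e4]].
exists (M2 d1 0 0 d4); rewrite /m2mul /=.
by split; congr M2; rewrite ?(mulr0, mul0r, addr0, add0r).
Qed.

(* Conjugating by [diag(1, b^-1)] turns an invertible corner [b] into [1]. *)
Lemma m2similar_corner_unit a b c e b' : b * b' = 1 -> b' * b = 1 ->
  m2similar s (M2 a b c e) (M2 a 1 (b * c) (b * e * b')).
Proof.
move=> bb' b'b; exists (M2 1 0 0 b'), (M2 1 0 0 b); rewrite /m2mul /=.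
by split; congr M2; rewrite ?(mulr0, mul0r, addr0, add0r, mul1r, mulr1).
Qed.

Hypothesis s2C : central (s ^+ 2).

Lemma m2mulA (A B C : m2 T) : m2mul s (m2mul s A B) C = m2mul s A (m2mul s B C).
Proof.
case: A B C => a1 a2 a3 a4 [b1 b2 b3 b4] [c1 c2 c3 c4]; rewrite /m2mul /=.
move: (s ^+ 2) s2C => c cC; have cC' t : t * c = c * t by rewrite cC.
by congr M2; rewrite !(mulrDl, mulrDr, mulrA) ?cC' ?mulrA addrACA.
Qed.

Lemma m2_inv_unique (P X Y : m2 T) :
  m2mul s P X = m2one T -> m2mul s Y P = m2one T -> m2mul s X P = m2one T.
Proof.
move=> PX YP; suff -> : X = Y by [].
by rewrite -[X]m2mul1m -YP m2mulA PX m2mulm1.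
Qed.

Lemma m2similar_trans (A B C : m2 T) :
  m2similar s A B -> m2similar s B C -> m2similar s A C.
Proof.
case=> P1 [Q1 [PQ1 QP1 ->]] [P2 [Q2 [PQ2 QP2 ->]]].
exists (m2mul s P1 P2), (m2mul s Q2 Q1); split; last by rewrite !m2mulA.
- by rewrite m2mulA -(m2mulA P2) PQ2 m2mul1m PQ1.
- by rewrite m2mulA -(m2mulA Q1) QP1 m2mul1m QP2.
Qed.

End TwistedMatrices.

Lemma central_exp (T : nzRingType) (s : T) n : central s -> central (s ^+ n).
Proof. by move=> sC t; apply/commr_sym/commrX/commr_sym. Qed.

Lemma m2map_can (T U : Type) (f : T -> U) (g : U -> T) :
  cancel f g -> cancel (m2map f) (m2map g).
Proof. by move=> fK [] *; rewrite /m2map /= !fK. Qed.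

Lemma m2map_one (T U : nzRingType) (phi : {rmorphism T -> U}) :
  m2map phi (m2one T) = m2one U.
Proof. by rewrite /m2map /= rmorph0 rmorph1. Qed.

Lemma m2map_mul (T U : nzRingType) (phi : {rmorphism T -> U}) s (A B : m2 T) :
  m2map phi (m2mul s A B) = m2mul (phi s) (m2map phi A) (m2map phi B).
Proof. by rewrite /m2map /m2mul /= !(rmorphD, rmorphM, rmorphXn). Qed.

Section Lifting.
Variables (R : nzRingType) (s : pser R).
Hypotheses (s0 : const_term s = 0) (sC : central s).
Local Notation m2const := (m2map (@const_term R)).
Local Notation m2pconst := (m2map (@pconst R)).

Let s2C : central (s ^+ 2) := central_exp 2 sC.

Lemma m2const_mul (A B : m2 (pser R)) :
  m2const (m2mul s A B) = m2mul 0 (m2const A) (m2const B).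
Proof. by rewrite -s0; apply: m2map_mul. Qed.

Lemma m2pconst_mul_offdiag (X Y : m2 R) :
  m12 (m2mul s (m2pconst X) (m2pconst Y)) = pconst (m12 (m2mul 0 X Y)) /\
  m21 (m2mul s (m2pconst X) (m2pconst Y)) = pconst (m21 (m2mul 0 X Y)).
Proof. by case: X Y => ? ? ? ? [? ? ? ?]; rewrite /= !rmorphD !rmorphM. Qed.

Lemma m2pconst_mul_inv (X Y : m2 R) : m2mul 0 X Y = m2one R ->
  exists D, m2mul s (m2mul s (m2pconst X) (m2pconst Y)) D = m2one _ /\
            m2mul s D (m2mul s (m2pconst X) (m2pconst Y)) = m2one _.
Proof.
move=> XY; have [E12 E21] := m2pconst_mul_offdiag X Y.
have cE : m2const (m2mul s (m2pconst X) (m2pconst Y)) = m2one R.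
  by rewrite m2const_mul !(m2map_can (@pconstK R)).
apply: m2_diag_inv; first by rewrite E12 XY rmorph0.
- by rewrite E21 XY rmorph0.
- by apply: pser_unit_const1; exact: (congr1 (@m11 _) cE).
- by apply: pser_unit_const1; exact: (congr1 (@m22 _) cE).
Qed.

Lemma m2pconst_unit_lift (P0 Q0 : m2 R) :
  m2mul 0 P0 Q0 = m2one R -> m2mul 0 Q0 P0 = m2one R ->
  exists Q, [/\ m2mul s (m2pconst P0) Q = m2one _,
                m2mul s Q (m2pconst P0) = m2one _ & m2const Q = Q0].
Proof.
move=> PQ0 QP0; set P := m2pconst P0; set Q1 := m2pconst Q0.
have [D [PQD _]] := m2pconst_mul_inv PQ0.
have [D' [_ DQP]] := m2pconst_mul_inv QP0.
have PQ : m2mul s P (m2mul s Q1 D) = m2one _ by rewrite -m2mulA.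
exists (m2mul s Q1 D); split=> //.
  by apply: (m2_inv_unique s2C PQ (Y := m2mul s D' Q1)); rewrite m2mulA.
have cD : m2const D = m2one R.
  move/(congr1 m2const): PQD; rewrite m2map_one !m2const_mul.
  by rewrite !(m2map_can (@pconstK R)) PQ0 m2mul1m.
by rewrite m2const_mul cD (m2map_can (@pconstK R)) m2mulm1.
Qed.

Lemma m2similar_lift (A : m2 (pser R)) (B0 : m2 R) :
  m2similar 0 (m2const A) B0 -> exists A1, m2similar s A A1 /\ m2const A1 = B0.
Proof.
case=> P0 [Q0 [PQ0 QP0 ->]].
have [Q [PQ QP cQ]] := m2pconst_unit_lift PQ0 QP0.
exists (m2mul s (m2mul s Q A) (m2pconst P0)); split; first by exists (m2pconst P0), Q.
by rewrite !m2const_mul cQ (m2map_can (@pconstK R)).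
Qed.

Lemma m2similar_lift_corner1 (A : m2 (pser R)) (a b c : R) :
  m2similar 0 (m2const A) (M2 a 1 b c) ->
  exists a' b' c', [/\ m2similar s A (M2 a' 1 b' c'),
    const_term a' = a, const_term b' = b & const_term c' = c].
Proof.
case/m2similar_lift => -[a1 a2 a3 a4] [simA [ca c1 cb cc]].
have [d [a2d da2]] := pser_unit_const1 c1.
have cd : const_term d = 1.
  by move/(congr1 (@const_term R)): a2d; rewrite const_termM c1 mul1r.
exists a1, (a2 * a3), (a2 * a4 * d); split.
- apply: (m2similar_trans s2C simA); exact: (m2similar_corner_unit _ _ _ _ a2d da2).
- by [].
- by rewrite const_termM c1 mul1r.
- by rewrite !const_termM c1 cd mul1r mulr1.
Qed.

End Lifting.

Theorem lemma2p17 (R : nzRingType) (s : pser R) :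
  local_ring R ->
  const_term s = 0 ->
  central s ->
  jacobson s ->
  forall A : m2 (pser R),
    (forall u v w : R,
       jacobson (u - 1) -> is_unit v -> jacobson w ->
       m2similar (const_term s) (m2map (@const_term R) A) (M2 u 1 v w) ->
       exists ux vx wx : pser R,
         jacobson (ux - 1) /\ is_unit vx /\ jacobson wx /\
             const_term ux = u /\ const_term vx = v /\ const_term wx = w /\
             m2similar s A (M2 ux 1 vx wx)) /\
    (forall u v w : R,
       jacobson (u - 1) -> is_unit v -> jacobson w ->
       m2similar (const_term s) (m2map (@const_term R) A) (M2 w 1 v u) ->
       exists ux vx wx : pser R,
         jacobson (ux - 1) /\ is_unit vx /\ jacobson wx /\
             const_term ux = u /\ const_term vx = v /\ const_term wx = w /\
             m2similar s A (M2 wx 1 vx ux)).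
Proof.
move=> _ s0 sC _ A; rewrite s0.
have J1 (f : pser R) r : jacobson (r - 1) -> const_term f = r -> jacobson (f - 1).
  by move=> Jr cf; apply: jacobson_const_term; rewrite const_termB cf.
have J0 (f : pser R) r : jacobson r -> const_term f = r -> jacobson f.
  by move=> Jr cf; apply: jacobson_const_term; rewrite cf.
have U (f : pser R) r : is_unit r -> const_term f = r -> is_unit f.
  by move=> Ur cf; apply: pser_unit; rewrite cf.
split=> u v w Ju Uv Jw /(m2similar_lift_corner1 s0 sC) [a [b [c [simA ca cb cc]]]].
- by exists a, b, c; do !split=> //; [exact: J1 ca | exact: U cb | exact: J0 cc].
- by exists c, b, a; do !split=> //; [exact: J1 cc | exact: U cb | exact: J0 ca].
Qed.
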